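(* Let $G$ be a balanced bipartite graph of order $2n$ with partite sets $X$ and $Y$, and let $M$ be a perfect matching of $G$. If $d_G(x) \ge \frac{n+3}{2}$ for every vertex $x \in X$, then $G$ has an $M$-cycle of length $6$.
   Context: Graphs are finite and simple. A cycle $C$ is an $M$-cycle if $|E(C)\cap M| = |C|/2$, i.e. it alternates between edges in $M$ and edges not in $M$. *)

From mathcomp Require Import all_boot.
Set Implicit Arguments. Unset Strict Implicit. Unset Printing Implicit Defensive.

Definition simple_graph (T : finType) (e : rel T) : Prop :=
  symmetric e /\ irreflexive e.

Definition deg (T : finType) (e : rel T) (x : T) : nat := #|[set y | e x y]|.

Definition bipartition (T : finType) (e : rel T) (X Y : {set T}) : Prop :=
  [/\ X :&: Y = set0, X :|: Y = setT &
      forall u v, e u v -> (u \in X) && (v \in Y) || (u \in Y) && (v \in X)].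

(* A perfect matching M of G, given as a symmetric relation m (m u v means
   the edge uv belongs to M): m is a subrelation of e and every vertex is
   incident with exactly one edge of M. *)
Definition perfect_matching (T : finType) (e m : rel T) : Prop :=
  [/\ symmetric m, subrel m e & forall x, #|[set y | m x y]| = 1].

(* A cycle of G, given by its cyclic sequence of distinct vertices
   c = [:: v_0; ...; v_{k-1}] with k >= 3 and edges v_i v_{i+1 mod k}. *)
Definition is_cycle (T : finType) (e : rel T) (c : seq T) : Prop :=
  [/\ 3 <= size c, uniq c & cycle e c].

Definition cycle_edges (T : finType) (c : seq T) : seq (T * T) :=
  zip c (rot 1 c).

Definition M_cycle (T : finType) (e m : rel T) (c : seq T) : Prop :=
  is_cycle e c /\ count (fun p => m p.1 p.2) (cycle_edges c) = size c %/ 2.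

From mathcomp Require Import all_boot.
From mathcomp Require Import zify.

Set Implicit Arguments.
Unset Strict Implicit.
Unset Printing Implicit Defensive.

(* Double counting the X-Y edges gives a vertex y0 in Y of degree at least
   (n+3)/2.  Let y1 <> y0 be a neighbour of M(y0).  Inside Y, the sets
   N(M(y1)) - y1 and M(N(y0)) - y0 have more than n/2 elements each, so they
   share a vertex y2, and y0, M(y0), y1, M(y1), y2, M(y2) is an M-cycle. *)

Lemma exists_ge_sum (I : finType) (A : {pred I}) (F : I -> nat) k :
  0 < #|A| -> #|A| * k <= \sum_(i in A) F i -> exists2 i, i \in A & k <= F i.
Proof.
move=> A_gt0 sumF; apply/exists_inP; apply: contraLR sumF => /exists_inPn ltF.
have [i iA] := card_gt0P A_gt0.
have k_gt0 : 0 < k by have := ltF i iA; rewrite -ltnNge; apply: leq_ltn_trans.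
rewrite -ltnNge; apply: (@leq_ltn_trans (#|A| * k.-1)).
  rewrite -sum_nat_const leq_sum // => j /ltF.
  by rewrite -ltnNge; case: (k) k_gt0.
by rewrite ltn_pmul2l // prednK.
Qed.

Lemma pigeonhole_setI (T : finType) (A B C : {set T}) :
  A :|: B \subset C -> #|C| < #|A| + #|B| -> exists x, x \in A :&: B.
Proof.
move=> /subset_leq_card leABC ltC; apply/card_gt0P.
by have := cardsUI A B; lia.
Qed.

Lemma deg_setD1 (T : finType) (e : rel T) x y :
  e x y -> deg e x = #|[set z | e x z] :\ y|.+1.
Proof. by move=> exy; rewrite /deg (cardsD1 y) inE exy. Qed.

Lemma deg_sumE (T : finType) (e : rel T) (A : {set T}) x :
  (forall y, e x y -> y \in A) -> deg e x = \sum_(y in A) e x y.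
Proof.
move=> NA; rewrite /deg -sum1_card [LHS]big_mkcond [RHS]big_mkcond /=.
apply: eq_bigr => y _; rewrite inE.
by case: (boolP (e x y)) => [/NA -> | _]; last case: ifP.
Qed.

Lemma exists_neighbour_neq (T : finType) (e : rel T) x y :
  1 < deg e x -> exists2 z, e x z & z != y.
Proof.
rewrite /deg (cardsD1 y) => deg_gt1.
have : 0 < #|[set z | e x z] :\ y| by lia.
by case/card_gt0P=> z; rewrite !inE => /andP[z_neq_y exz]; exists z.
Qed.

Section Bipartite.

Context {T : finType} {e : rel T} {X Y : {set T}}.
Hypothesis bip : bipartition e X Y.

Lemma bipartition_notinY x : x \in X -> x \notin Y.
Proof.
case: bip => XY _ _ xX; apply/negP => xY.
by have := in_set0 x; rewrite -XY inE xX xY.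
Qed.

Lemma bipartition_notinX y : y \in Y -> y \notin X.
Proof. by apply: contraL => /bipartition_notinY. Qed.

Lemma edge_XY x y : x \in X -> e x y -> y \in Y.
Proof.
move=> xX exy; have nY := bipartition_notinY xX.
case: bip => _ _ /(_ x y exy).
by rewrite xX (negbTE nY) orbF.
Qed.

Lemma edge_YX y x : y \in Y -> e y x -> x \in X.
Proof.
move=> yY eyx; have nX := bipartition_notinX yY.
case: bip => _ _ /(_ y x eyx).
by rewrite yY (negbTE nX).
Qed.

Lemma sum_deg_bipartition :
  symmetric e -> \sum_(x in X) deg e x = \sum_(y in Y) deg e y.
Proof.
move=> e_sym.
transitivity (\sum_(x in X) \sum_(y in Y) (e x y : nat)).
  by apply: eq_bigr => x xX; apply: deg_sumE => y; apply: edge_XY.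
rewrite exchange_big; apply: eq_bigr => y yY.
rewrite (deg_sumE (A := X)) => [|x]; last exact: edge_YX.
by apply: eq_bigr => x _; rewrite e_sym.
Qed.

Lemma exists_deg_geY c k :
  symmetric e -> #|X| = #|Y| -> 0 < #|Y| ->
  (forall x, x \in X -> k <= c * deg e x) ->
  exists2 y, y \in Y & k <= c * deg e y.
Proof.
move=> e_sym cardXY Y_gt0 degX; apply: exists_ge_sum => //.
rewrite -big_distrr -(sum_deg_bipartition e_sym) big_distrr /= -cardXY.
by rewrite -sum_nat_const; apply: leq_sum.
Qed.

End Bipartite.

Definition mate (T : finType) (m : rel T) x := odflt x [pick y | m x y].

Section Matching.

Context {T : finType} {e m : rel T}.
Hypothesis pm : perfect_matching e m.
Local Notation mate := (mate m).

Lemma matchedE x y : m x y = (y == mate x).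
Proof.
case: pm => _ _ mcard; have /eqP/cards1P [a Na] := mcard x.
have Na_eq z : m x z = (z == a) by rewrite -in_set1 -Na inE.
rewrite /mate; case: pickP => [b | m0]; first by rewrite !Na_eq => /eqP ->.
by have := m0 a; rewrite Na_eq eqxx.
Qed.

Lemma mateP x : m x (mate x).
Proof. by rewrite matchedE. Qed.

Lemma mateK : involutive mate.
Proof.
case: pm => msym _ _ x.
by apply/esym/eqP; rewrite -matchedE msym mateP.
Qed.

Lemma mate_inj : injective mate.
Proof. exact: inv_inj mateK. Qed.

Lemma edge_mate x : e x (mate x).
Proof. by case: pm => _ msub _; apply/msub/mateP. Qed.

Lemma M_cycle_mates y0 y1 y2 :
  uniq [:: y0; mate y0; y1; mate y1; y2; mate y2] ->
  e (mate y0) y1 -> e (mate y1) y2 -> e (mate y2) y0 ->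
  M_cycle e m [:: y0; mate y0; y1; mate y1; y2; mate y2].
Proof.
move=> uniq_c e01 e12 e20; split; first split=> //.
  by rewrite /= !edge_mate e01 e12 e20.
have : uniq [:: y0; y1; y2].
  apply: subseq_uniq uniq_c; apply/subseqP.
  by exists [:: true; false; true; false; true; false].
rewrite /= !inE negb_or => /and3P[/andP[y01 y02] y12 _].
rewrite /cycle_edges /= !matchedE !mateK !eqxx (eq_sym y1) (eq_sym y2).
by rewrite (negbTE y01) (negbTE y02) (negbTE y12).
Qed.

End Matching.

Section BipartiteMatching.

Context {T : finType} {e m : rel T} {X Y : {set T}}.
Hypotheses (bip : bipartition e X Y) (pm : perfect_matching e m).
Local Notation mate := (mate m).

Lemma mate_inX y : y \in Y -> mate y \in X.
Proof. move=> yY; exact: (edge_YX bip yY (edge_mate pm y)). Qed.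

Lemma mate_inY x : x \in X -> mate x \in Y.
Proof. move=> xX; exact: (edge_XY bip xX (edge_mate pm x)). Qed.

Lemma uniq_mates y0 y1 y2 :
  y0 \in Y -> y1 \in Y -> y2 \in Y ->
  uniq [:: y0; y1; y2] -> uniq [:: y0; mate y0; y1; mate y1; y2; mate y2].
Proof.
move=> y0Y y1Y y2Y.
have mate_neq a b : a \in Y -> b \in Y -> (mate a == b) = false.
  move=> aY bY; apply: contraTF bY => /eqP <-.
  exact: (bipartition_notinY bip (mate_inX aY)).
rewrite /= !inE !(inj_eq (mate_inj pm)) ![_ == mate _]eq_sym !mate_neq //.
by rewrite /= !orbF => /and3P [-> -> _].
Qed.

Lemma exists_mate_neighbour x y :
  x \in X -> y \in Y -> #|Y| + 2 < deg e x + deg e y ->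
  exists y2, [/\ e x y2, y2 != mate x, e y (mate y2) & y2 != y].
Proof.
move=> xX yY deg_sum.
pose S := mate @^-1: [set w | e y w].
have yS : y \in S by rewrite !inE edge_mate.
have [y2] : exists y2, y2 \in ([set z | e x z] :\ mate x) :&: (S :\ y).
  apply: (pigeonhole_setI (C := Y)).
    apply/subsetP=> z; rewrite !inE => /orP[/andP[_ /(edge_XY bip xX)] //|].
    by move=> /andP[_ /(edge_YX bip yY)/mate_inY]; rewrite (mateK pm).
  have degS : deg e y = #|S :\ y|.+1.
    by rewrite /deg -(card_preimset _ (mate_inj pm)) (cardsD1 y) yS.
  by move: deg_sum; rewrite (deg_setD1 (edge_mate pm x)) degS; lia.
by rewrite !inE => /andP[/andP[? ?] /andP[? ?]]; exists y2.
Qed.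

End BipartiteMatching.

Theorem lemma2 (T : finType) (e m : rel T) (X Y : {set T}) (n : nat) :
  simple_graph e ->
  bipartition e X Y ->
  0 < n -> #|X| = n -> #|Y| = n ->
  perfect_matching e m ->
  (forall x, x \in X -> n + 3 <= 2 * deg e x) ->
  exists c : seq T, size c = 6 /\ M_cycle e m c.
Proof.
move=> [e_sym _] bip n_gt0 cardX cardY pm degX.
have [y0 y0Y deg_y0] : exists2 y0, y0 \in Y & n + 3 <= 2 * deg e y0.
  by apply: (exists_deg_geY bip e_sym) => //; rewrite ?cardX cardY.
have x0X := mate_inX bip pm y0Y.
have [y1 e01 y1_neq_y0] : exists2 y1, e (mate m y0) y1 & y1 != y0.
  by apply: exists_neighbour_neq; have := degX _ x0X; lia.
have y1Y := edge_XY bip x0X e01.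
have x1X := mate_inX bip pm y1Y.
have deg_sum : #|Y| + 2 < deg e (mate m y1) + deg e y0.
  by have := degX _ x1X; lia.
have [y2 [e12 y2_neq_y1 e20 y2_neq_y0]] :=
  exists_mate_neighbour bip pm x1X y0Y deg_sum.
have y2Y := edge_XY bip x1X e12.
rewrite (mateK pm) in y2_neq_y1.
exists [:: y0; mate m y0; y1; mate m y1; y2; mate m y2]; split=> //.
apply: (M_cycle_mates pm) => //; last by rewrite e_sym.
apply: (uniq_mates bip pm) => //.
rewrite /= !inE negb_or ![y0 == _]eq_sym.
by rewrite y1_neq_y0 y2_neq_y0 eq_sym y2_neq_y1.
Qed.
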